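(* Let $K$ be a compact Hausdorff space with at least two points and let $\mathcal{A}$ be a non-empty subalgebra of $C(K,\mathbb{C})$. Suppose there is a subset $K_0\subset K$ such that for every $f\in C(K,\mathbb{C})$ and every $(x,y)\in K_0^2$ there exists a sequence $(f_n^{x,y})_{n\ge0}\subset\mathcal{A}$ with $f_n^{x,y}(t)\to f(t)$ as $n\to+\infty$ for $t\in\{x,y\}$. Suppose moreover that: (1) $\mathcal{A}$ separates the points of $K\setminus K_0$ (for distinct $x,y\in K\setminus K_0$ there is $g\in\mathcal{A}$ with $g(x)\neq g(y)$) and separates any point of $K_0$ from any (distinct) point of $K$; (2) at least one of the following holds: (2a) for every $x\in K\setminus K_0$ there exists $g\in\mathcal{A}$ with $g(x)\neq 0$, or (2b) $\mathcal{A}$ contains all constant functions; and (3) for every $g\in\mathcal{A}$ its complex conjugate $\bar g=\mathrm{Re}(g)-i\,\mathrm{Im}(g)$ belongs to $\mathcal{A}$. Then $\mathcal{A}$ is dense in $C(K,\mathbb{C})$ for the uniform norm.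
   Context: $C(K,\mathbb{C})$ is the algebra of continuous complex-valued functions on $K$ with the uniform norm $\|g\|=\sup_{x\in K}|g(x)|$; density and closure refer to this norm. *)

(* Complex numbers: CC R := R[i] = complex R
   (mathcomp-real-closed) for R : realType, viewed as a numClosedFieldType so that
   MathComp-Analysis equips it with its norm |.| and the induced topology. *)
From HB Require Import structures.
From mathcomp Require Import all_boot all_order all_algebra.
From mathcomp Require Import all_classical all_reals all_analysis.
From mathcomp Require Import complex.
Set Implicit Arguments. Unset Strict Implicit. Unset Printing Implicit Defensive.
Import Order.TTheory GRing.Theory Num.Theory.
Import numFieldNormedType.Exports.
Local Open Scope classical_set_scope.
Local Open Scope ring_scope.

Definition CC (R : realType) : numClosedFieldType := R[i].

Definition is_subalgebra (R : realType) (K : topologicalType)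
    (A : set (K -> CC R)) : Prop :=
  [/\ (forall g, A g -> continuous g),
      (forall g h, A g -> A h -> A (g \+ h)),
      (forall g h, A g -> A h -> A (g \* h)) &
      (forall (c : CC R) g, A g -> A (fun x => c * g x))].

Definition uniformly_dense (R : realType) (K : topologicalType)
    (A : set (K -> CC R)) : Prop :=
  forall f : K -> CC R, continuous f ->
  forall eps : R, 0 < eps ->
  exists2 g, A g & forall x, `|f x - g x| <= (eps%:C)%C.

From HB Require Import structures.
From mathcomp Require Import all_boot all_order all_algebra.
From mathcomp Require Import all_classical all_reals all_analysis.
From mathcomp Require Import complex finmap ring lra.
Import Order.TTheory GRing.Theory Num.Theory.
Import numFieldNormedType.Exports.
Local Open Scope classical_set_scope.
Local Open Scope ring_scope.

(* The hypotheses make A separate all points of K and vanish at no point (at a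
   point of K0, approximate the constant function 1), so the complex
   Stone-Weierstrass theorem applies.
   Since A is closed under conjugation, the real parts of its elements form a
   real algebra that interpolates any real function at any two points.  The
   uniform closure of such an algebra is a lattice: |a| = M sqrt ((a / M)^2) is
   a uniform limit of polynomials in a, given by the iteration
   p <- p + (r^2 - p^2) / 2, whose error at r in [0, 1] after n steps is at most
   2 / (n + 2).  Finally, a lattice of continuous functions interpolating f at
   any two points approximates f on the compact space K: minima over a finite
   subcover give functions below f + eps that agree with f at a given point, and
   the maximum of finitely many of these is within eps of f. *)

Section BigMinMaxClosed.
Context {d : Order.disp_t} {X : orderType d} {T I : Type} (L : set (T -> X)).

Lemma bigmin_fun_closed (s : seq I) (G : I -> T -> X) (g0 : T -> X) :
  (forall g h, L g -> L h -> L (g \min h)) -> L g0 -> (forall i, L (G i)) ->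
  L (fun z => \big[Order.min/g0 z]_(i <- s) G i z).
Proof.
move=> Lmin Lg0 LG; elim: s => [|i s IH].
  by under eq_fun do rewrite big_nil.
by under eq_fun do rewrite big_cons; exact: Lmin.
Qed.

Lemma bigmax_fun_closed (s : seq I) (G : I -> T -> X) (g0 : T -> X) :
  (forall g h, L g -> L h -> L (g \max h)) -> L g0 -> (forall i, L (G i)) ->
  L (fun z => \big[Order.max/g0 z]_(i <- s) G i z).
Proof.
move=> Lmax Lg0 LG; elim: s => [|i s IH].
  by under eq_fun do rewrite big_nil.
by under eq_fun do rewrite big_cons; exact: Lmax.
Qed.

End BigMinMaxClosed.

(* [compact_cover] is only stated for pointed spaces; a point of [K] makes it one. *)
Definition pointed_at {K : topologicalType} (x0 : K) : Type := K.
HB.instance Definition _ (K : topologicalType) (x0 : K) :=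
  Topological.copy (pointed_at x0) K.
HB.instance Definition _ (K : topologicalType) (x0 : K) :=
  isPointed.Build (pointed_at x0) x0.

Lemma compact_cover_compact {K : topologicalType} (x0 : K) :
  compact [set: K] -> cover_compact [set: K].
Proof.
move=> Kc; have : compact [set: pointed_at x0] := Kc.
by rewrite compact_cover.
Qed.

Lemma open_lt_addr {R : realType} {K : topologicalType} (u v : K -> R) (c : R) :
  continuous u -> continuous v -> open [set z | u z < v z + c].
Proof.
move=> cu cv; have -> : [set z | u z < v z + c] = (u - v) @^-1` [set t | t < c].
  by apply/seteqP; split => z /=; rewrite ltrBlDl addrC.
apply: open_comp; last exact: open_lt.
by move=> z _; exact: continuousB (cu z) (cv z).
Qed.

Section LatticeApproximation.
Context {R : realType} {K : topologicalType} {L : set (K -> R)}.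
Hypothesis Lcont : forall h, L h -> continuous h.
Hypothesis Lmin : forall g h, L g -> L h -> L (g \min h).
Hypothesis Lmax : forall g h, L g -> L h -> L (g \max h).
Hypothesis Kcover : cover_compact [set: K].
Variables (f : K -> R) (eps : R).
Hypothesis fcont : continuous f.
Hypothesis eps_gt0 : 0 < eps.
Hypothesis Linterp : forall x y, exists2 a, L a & a x = f x /\ a y = f y.

Lemma lattice_approx_above (x : K) :
  exists2 h, L h & h x = f x /\ forall z, h z < f z + eps.
Proof.
have /choice[g Lg] : forall y, exists a, L a /\ a x = f x /\ a y = f y.
  by move=> y; have [a La axy] := Linterp x y; exists a.
have [D _ Dcover] : finite_subset_cover [set: K]
    (fun y => [set z | g y z < f z + eps]) [set: K].
  apply: Kcover => [y _|z _].
    exact: open_lt_addr (Lcont _ (proj1 (Lg y))) fcont.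
  by exists z => //=; have [_ [_ ->]] := Lg z; rewrite ltrDl.
exists (fun z => \big[Order.min/g x z]_(y <- D) g y z).
  by apply: bigmin_fun_closed => // [|y]; [case: (Lg x) | case: (Lg y)].
have gx y : g y x = f x by case: (Lg y) => _ [].
split; first by rewrite bigmin_eq_id gx // => y _; rewrite !gx.
move=> z; have [y Dy gyz] := Dcover z I.
exact: le_lt_trans (ge_bigmin_seq _ _ _ _ Dy isT) gyz.
Qed.

Lemma lattice_approx (x0 : K) : exists2 h, L h & forall z, `|f z - h z| <= eps.
Proof.
have /choice[h Lh] : forall x, exists h, L h /\ h x = f x /\ forall z, h z < f z + eps.
  by move=> x; have [h Lh hx] := lattice_approx_above x; exists h.
have [D _ Dcover] : finite_subset_cover [set: K]
    (fun x => [set z | f z < h x z + eps]) [set: K].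
  apply: Kcover => [x _|z _].
    exact: open_lt_addr fcont (Lcont _ (proj1 (Lh x))).
  by exists z => //=; have [_ [-> _]] := Lh z; rewrite ltrDl.
exists (fun z => \big[Order.max/h x0 z]_(x <- D) h x z).
  by apply: bigmax_fun_closed => // [|x]; [case: (Lh x0) | case: (Lh x)].
move=> z /=; set H := \big[_/_]_(_ <- _) _.
have h_lt x : h x z < f z + eps by case: (Lh x) => _ [_]; apply.
have H_above : H <= f z + eps by apply: bigmax_le => [|x _]; exact: ltW.
have [x Dx /= hxz] := Dcover z I.
have H_below : h x z <= H := le_bigmax_seq _ _ _ _ Dx isT.
by rewrite ler_norml; apply/andP; split; lra.
Qed.
End LatticeApproximation.

Fixpoint sqrt_approx {R : unitRingType} (s : R) (n : nat) : R :=
  if n is m.+1 then sqrt_approx s m + (s - sqrt_approx s m ^+ 2) / 2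
  else 0.

Lemma sqrt_approx_bound {R : realFieldType} (r : R) (n : nat) : 0 <= r <= 1 ->
  let p := sqrt_approx (r ^+ 2) n in
  [/\ 0 <= p, p <= r & (r - p) * (n%:R + 2) <= 2].
Proof.
move=> /andP[r_ge0 r_le1]; elim: n => [|n [p_ge0 p_le err]] /=; first by split; lra.
rewrite -[n.+1]addn1 natrD.
move: p_ge0 p_le err; set p := sqrt_approx _ n; set N := n%:R => p_ge0 p_le err.
have N_ge0 : 0 <= N by rewrite ler0n.
have -> : r - (p + (r ^+ 2 - p ^+ 2) / 2) = (r - p) * (1 - (r + p) / 2).
  by rewrite !expr2; field.
split.
- have : 0 <= (r - p) * (r + p) by apply: mulr_ge0; lra.
  rewrite !expr2; lra.
- have : 0 <= (r - p) * (2 - (r + p)) by apply: mulr_ge0; lra.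
  rewrite !expr2; lra.
- have d_le : (r - p) * (1 - (r + p) / 2) <= (r - p) * (1 - (r - p) / 2).
    by apply: ler_wpM2l; lra.
  have : 0 <= (2 - (r - p) * (N + 2)) * (2 - (r - p)) by apply: mulr_ge0; lra.
  nra.
Qed.

Definition uniform_closure {R : realType} {T : Type} (B : set (T -> R)) : set (T -> R) :=
  [set h | forall eps, 0 < eps -> exists2 a, B a & forall x, `|h x - a x| <= eps].

Section UniformClosure.
Context {R : realType} {T : Type} {B : set (T -> R)}.

Lemma uniform_closure_sub : B `<=` uniform_closure B.
Proof. by move=> a Ba eps eps_gt0; exists a => // x; rewrite subrr normr0 ltW. Qed.

Lemma uniform_closure_closed : uniform_closure (uniform_closure B) `<=` uniform_closure B.
Proof.
move=> h hC eps eps_gt0.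
have eps2_gt0 : 0 < eps / 2 by rewrite divr_gt0.
have [g gC hg] := hC _ eps2_gt0; have [a Ba ga] := gC _ eps2_gt0.
exists a => // x; have := ler_normD (h x - g x) (g x - a x).
by rewrite addrA subrK; move: (hg x) (ga x); lra.
Qed.

Hypothesis Badd : forall a b, B a -> B b -> B (a \+ b).
Hypothesis Bscale : forall c a, B a -> B (fun x => c * a x).

Lemma uniform_closure_add g h : uniform_closure B g -> uniform_closure B h ->
  uniform_closure B (g \+ h).
Proof.
move=> gC hC eps eps_gt0.
have eps2_gt0 : 0 < eps / 2 by rewrite divr_gt0.
have [a Ba ga] := gC _ eps2_gt0; have [b Bb hb] := hC _ eps2_gt0.
exists (a \+ b); first exact: Badd.
move=> x /=; have := ler_normD (g x - a x) (h x - b x).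
rewrite addrACA -opprD; move: (ga x) (hb x); lra.
Qed.

Lemma uniform_closure_scale c h : uniform_closure B h ->
  uniform_closure B (fun x => c * h x).
Proof.
move=> hC eps eps_gt0.
have c1_gt0 : 0 < `|c| + 1 by rewrite ltr_pwDr.
have [a Ba ha] := hC _ (divr_gt0 eps_gt0 c1_gt0).
exists (fun x => c * a x); first exact: Bscale.
move=> x; rewrite -mulrBr normrM.
apply: le_trans (_ : (`|c| + 1) * `|h x - a x| <= eps).
  by rewrite ler_wpM2r // lerDl.
by rewrite -ler_pdivlMl // mulrC.
Qed.

Lemma uniform_closure_comb c d g h : uniform_closure B g -> uniform_closure B h ->
  uniform_closure B (fun x => c * g x + d * h x).
Proof. by move=> gC hC; apply: uniform_closure_add; apply: uniform_closure_scale. Qed.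

Hypothesis B0 : B (fun=> 0).
Hypothesis Bmul : forall a b, B a -> B b -> B (a \* b).
Hypothesis Bbounded : forall a, B a -> exists M, forall x, `|a x| <= M.

Lemma sqrt_approx_in S n : B S -> B (fun x => sqrt_approx (S x) n).
Proof.
move=> BS; elim: n => [//|n IH] /=.
set p := fun x => sqrt_approx (S x) n.
have -> : (fun x => p x + (S x - p x ^+ 2) / 2) =
    p \+ (fun x => 2^-1 * (S x + (-1) * (p \* p) x)).
  by apply/funext => x /=; rewrite expr2; ring.
by apply/Badd/Bscale/Badd/Bscale/Bmul.
Qed.

Lemma norm_in_uniform_closure a : B a -> uniform_closure B (fun x => `|a x|).
Proof.
move=> Ba eps eps_gt0; have [M0 aM0] := Bbounded _ Ba.
pose M := Num.max M0 0 + 1.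
have M_gt0 : 0 < M by rewrite ltr_wpDl // le_max lexx orbT.
have aM x : `|a x| <= M by rewrite (le_trans (aM0 x)) // ler_wpDr // le_max lexx.
have bound_ge0 : 0 <= 2 * M / eps by rewrite divr_ge0 ?mulr_ge0 ?ltW.
set n := Num.Def.archi_bound (2 * M / eps).
have n_gt : 2 * M < n%:R * eps by rewrite -ltr_pdivrMr // archi_boundP.
exists (fun x => M * sqrt_approx (M ^- 2 * (a x * a x)) n).
  exact/Bscale/sqrt_approx_in/Bscale/Bmul.
move=> x; pose r := `|a x| / M.
have r01 : 0 <= r <= 1.
  by rewrite /r divr_ge0 ?(ltW M_gt0) //= ler_pdivrMr // mul1r aM.
have -> : M ^- 2 * (a x * a x) = r ^+ 2.
  by rewrite /r expr_div_n real_normK ?num_real // expr2 mulrC.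
have [_ p_le err] := sqrt_approx_bound _ n r01.
have -> : `|a x| = M * r by rewrite /r mulrC divfK ?gt_eqF.
rewrite -mulrBr normrM gtr0_norm // ger0_norm ?subr_ge0 //.
have N_ge0 : 0 <= n%:R :> R by rewrite ler0n.
have : M * ((r - sqrt_approx (r ^+ 2) n) * (n%:R + 2)) <= M * 2 by rewrite ler_pM2l.
nra.
Qed.

Lemma uniform_closure_norm h : uniform_closure B h ->
  uniform_closure B (fun x => `|h x|).
Proof.
move=> hC; apply: uniform_closure_closed => eps eps_gt0.
have [a Ba ha] := hC _ eps_gt0.
exists (fun x => `|a x|); first exact: norm_in_uniform_closure.
by move=> x; apply: le_trans (ler_dist_dist _ _) (ha x).
Qed.

Lemma uniform_closure_min g h : uniform_closure B g -> uniform_closure B h ->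
  uniform_closure B (g \min h).
Proof.
move=> gC hC; have -> : g \min h = fun x =>
    2^-1 * (1 * g x + 1 * h x) + - 2^-1 * `|1 * g x + -1 * h x|.
  by apply/funext => x /=; rewrite minr_absE !mul1r mulN1r; ring.
apply: uniform_closure_comb; first exact: uniform_closure_comb.
exact/uniform_closure_norm/uniform_closure_comb.
Qed.

Lemma uniform_closure_max g h : uniform_closure B g -> uniform_closure B h ->
  uniform_closure B (g \max h).
Proof.
move=> gC hC; have -> : g \max h = fun x =>
    2^-1 * (1 * g x + 1 * h x) + 2^-1 * `|1 * g x + -1 * h x|.
  by apply/funext => x /=; rewrite maxr_absE !mul1r mulN1r; ring.
apply: uniform_closure_comb; first exact: uniform_closure_comb.
exact/uniform_closure_norm/uniform_closure_comb.
Qed.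

End UniformClosure.

Lemma continuous_bounded {R : realType} {K : topologicalType} (a : K -> R) :
  compact [set: K] -> continuous a -> exists M, forall x, `|a x| <= M.
Proof.
move=> Kc ac.
have [M [_ aM]] := compact_bounded (continuous_compact (continuous_subspaceT ac) Kc).
by exists (M + 1) => x; apply: aM; [rewrite ltrDl | exists x].
Qed.

Lemma stone_weierstrass_real {R : realType} {K : topologicalType}
    {B : set (K -> R)} (x0 : K) :
  compact [set: K] -> (forall a, B a -> continuous a) -> B (fun=> 0) ->
  (forall a b, B a -> B b -> B (a \+ b)) -> (forall a b, B a -> B b -> B (a \* b)) ->
  (forall c a, B a -> B (fun x => c * a x)) ->
  (forall (f : K -> R) x y, exists2 a, B a & a x = f x /\ a y = f y) ->
  forall f, continuous f -> uniform_closure B f.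
Proof.
move=> Kc Bcont B0 Badd Bmul Bscale Binterp f fcont.
have Bbounded a : B a -> exists M, forall x, `|a x| <= M.
  by move=> Ba; exact: continuous_bounded Kc (Bcont a Ba).
(* Keeping continuity alongside avoids proving that uniform limits are continuous. *)
pose L := [set h | uniform_closure B h /\ continuous h].
have Lcont h : L h -> continuous h by case.
have Lmin g h : L g -> L h -> L (g \min h).
  move=> [gC gc] [hC hc]; split=> [|x]; last exact: continuous_min (gc x) (hc x).
  by apply: uniform_closure_min.
have Lmax g h : L g -> L h -> L (g \max h).
  move=> [gC gc] [hC hc]; split=> [|x]; last exact: continuous_max (gc x) (hc x).
  by apply: uniform_closure_max.
have Linterp x y : exists2 a, L a & a x = f x /\ a y = f y.
  have [a Ba axy] := Binterp f x y; exists a => //.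
  by split; [exact: uniform_closure_sub | exact: Bcont].
apply: uniform_closure_closed => eps eps_gt0.
have [h [hC _] fh] := lattice_approx Lcont Lmin Lmax (compact_cover_compact x0 Kc)
  _ _ fcont eps_gt0 Linterp x0.
by exists h.
Qed.

Section ComplexParts.
Variable R : realType.
Implicit Types (z : CC R) (a : R).

Lemma normc_real a : `|a%:C%C : CC R| = `|a|%:C%C.
Proof. by rewrite normc_def /= expr0n addr0 sqrtr_sqr. Qed.

Lemma normc_i : `|'i%C : CC R| = 1.
Proof. by rewrite normc_def /= expr0n add0r expr1n sqrtr1. Qed.

Lemma normc_ge_Im z : `|complex.Im z|%:C%C <= `|z|.
Proof.
case: z => a b; rewrite !normc_def /= lecR.
by rewrite -sqrtr_sqr ler_sqrt ?addr_ge0 ?sqr_ge0 // lerDr sqr_ge0.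
Qed.

Lemma continuous_Re : continuous (fun z : CC R => complex.Re z).
Proof.
move=> z; apply/(@cvgrPdist_lt _ _ _ _ (nbhs_filter z)) => e e_gt0.
apply/nbhs_ballP; exists e%:C%C; first by rewrite /= ltcR.
move=> w; rewrite /ball /= -ltcR => zw.
by rewrite -raddfB; apply: le_lt_trans (normc_ge_Re _) zw.
Qed.

Lemma continuous_Im : continuous (fun z : CC R => complex.Im z).
Proof.
move=> z; apply/(@cvgrPdist_lt _ _ _ _ (nbhs_filter z)) => e e_gt0.
apply/nbhs_ballP; exists e%:C%C; first by rewrite /= ltcR.
move=> w; rewrite /ball /= -ltcR => zw.
by rewrite -raddfB; apply: le_lt_trans (normc_ge_Im _) zw.
Qed.
End ComplexParts.

Definition real_valued {R : realType} {K : Type} (A : set (K -> CC R)) :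
  set (K -> R) :=
  [set a | A (fun x => (a x)%:C%C)].

Section ComplexAlgebra.
Context {R : realType} {K : topologicalType} {A : set (K -> CC R)}.
Hypothesis Acont : forall g, A g -> continuous g.
Hypothesis Aadd : forall g h, A g -> A h -> A (g \+ h).
Hypothesis Amul : forall g h, A g -> A h -> A (g \* h).
Hypothesis Ascale : forall (c : CC R) g, A g -> A (fun x => c * g x).
Hypothesis A0 : A (fun=> 0).
Hypothesis Aconj : forall g, A g -> A (fun x => (g x)^*).

Lemma real_valued0 : real_valued A (fun=> 0).
Proof. exact: A0. Qed.

Lemma real_valued_add a b :
  real_valued A a -> real_valued A b -> real_valued A (a \+ b).
Proof.
move=> Aa Ab; rewrite /real_valued /=.
have -> : (fun x => (a x + b x)%:C%C) =
    (fun x => (a x)%:C%C) \+ (fun x => (b x)%:C%C).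
  by apply/funext => x; exact: rmorphD.
exact: Aadd.
Qed.

Lemma real_valued_mul a b :
  real_valued A a -> real_valued A b -> real_valued A (a \* b).
Proof.
move=> Aa Ab; rewrite /real_valued /=.
have -> : (fun x => (a x * b x)%:C%C) =
    (fun x => (a x)%:C%C) \* (fun x => (b x)%:C%C).
  by apply/funext => x; exact: rmorphM.
exact: Amul.
Qed.

Lemma real_valued_scale c a : real_valued A a -> real_valued A (fun x => c * a x).
Proof.
move=> Aa; rewrite /real_valued /=.
have -> : (fun x => (c * a x)%:C%C) = (fun x => c%:C%C * (a x)%:C%C).
  by apply/funext => x; exact: rmorphM.
exact: Ascale.
Qed.

Lemma real_valued_cont a : real_valued A a -> continuous a.
Proof. by move=> Aa x; exact: continuous_comp (Acont _ Aa x) (@continuous_Re R _). Qed.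

Lemma real_valued_Re g : A g -> real_valued A (fun x => complex.Re (g x)).
Proof.
move=> Ag; rewrite /real_valued /=.
have -> : (fun x => (complex.Re (g x))%:C%C) =
    (fun x => 2^-1 * (g \+ (fun x => (g x)^*)) x).
  by apply/funext => x; rewrite ReJ_add mulrC.
exact/Ascale/Aadd/Aconj.
Qed.

Lemma interp_one_zero x y : (exists2 g, A g & g x <> g y) ->
  (exists2 g, A g & g x <> 0) -> exists2 e, A e & e x = 1 /\ e y = 0.
Proof.
move=> [g Ag /eqP gxy] [h Ah /eqP hx].
have [gy0|gy] := eqVneq (g y) 0.
  exists (fun z => (g x)^-1 * g z); first exact: Ascale.
  by rewrite gy0 mulr0 mulVf // -gy0.
have [gx0|gx] := eqVneq (g x) 0.
  exists (fun z => (h x)^-1 * (h z + (- h y / g y) * g z)).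
    by apply: Ascale; apply: (Aadd _ _ Ah); apply: Ascale.
  by rewrite gx0 mulr0 addr0 mulVf // divfK // addrN mulr0.
exists (fun z => (g x * (g x - g y))^-1 * (g z * g z + (- g y) * g z)).
  by apply: Ascale; apply: (Aadd _ _ (Amul _ _ Ag Ag)); apply: Ascale.
have -> : g x * g x + - g y * g x = g x * (g x - g y) by ring.
have -> : g y * g y + - g y * g y = 0 by ring.
by rewrite mulr0 mulVf // mulf_neq0 // subr_eq0.
Qed.

Hypothesis Asep : forall x y, x <> y -> exists2 g, A g & g x <> g y.
Hypothesis Anz : forall x, exists2 g, A g & g x <> 0.

Lemma real_valued_interp (f : K -> R) x y :
  exists2 a, real_valued A a & a x = f x /\ a y = f y.
Proof.
have [<-|xy] := pselect (x = y).
  have [g Ag /eqP gx] := Anz x.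
  exists (fun z => complex.Re ((f x)%:C%C / g x * g z)).
    by apply: real_valued_Re; apply: Ascale.
  by rewrite divfK.
have [e1 Ae1 [e1x e1y]] := interp_one_zero _ _ (Asep _ _ xy) (Anz x).
have [e2 Ae2 [e2y e2x]] := interp_one_zero _ _ (Asep _ _ (nesym xy)) (Anz y).
exists (fun z => complex.Re ((f x)%:C%C * e1 z + (f y)%:C%C * e2 z)).
  by apply: real_valued_Re; apply: Aadd; apply: Ascale.
by rewrite e1x e1y e2x e2y !mulr1 !mulr0 addr0 add0r.
Qed.

Lemma stone_weierstrass_complex (x0 : K) : compact [set: K] -> uniformly_dense A.
Proof.
move=> Kc f fcont eps eps_gt0.
have approx := stone_weierstrass_real x0 Kc real_valued_cont real_valued0
  real_valued_add real_valued_mul real_valued_scale real_valued_interp.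
have eps2_gt0 : 0 < eps / 2 by rewrite divr_gt0.
have Re_fcont z := continuous_comp (fcont z) (@continuous_Re R _).
have Im_fcont z := continuous_comp (fcont z) (@continuous_Im R _).
have [a Aa fa] := approx _ Re_fcont _ eps2_gt0.
have [b Ab fb] := approx _ Im_fcont _ eps2_gt0.
exists (fun z => (a z)%:C%C + 'i%C * (b z)%:C%C).
  by apply: Aadd => //; apply: Ascale.
move=> z; have -> : f z - ((a z)%:C%C + 'i%C * (b z)%:C%C) =
    (complex.Re (f z) - a z)%:C%C + 'i%C * (complex.Im (f z) - b z)%:C%C.
  by rewrite !rmorphB {1}[f z]complexE; ring.
apply: le_trans (ler_normD _ _) _.
rewrite normrM normc_i mul1r !normc_real -rmorphD lecR.
by move: (fa z) (fb z); lra.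
Qed.
End ComplexAlgebra.

Theorem corollary1 (R : realType) (K : topologicalType)
  (A : set (K -> CC R)) (K0 : set K) :
  hausdorff_space K -> compact [set: K] ->
  (exists x y : K, x <> y) ->
  is_subalgebra A -> A !=set0 ->
  (forall f : K -> CC R, continuous f -> forall x y, K0 x -> K0 y ->
     exists u : nat -> (K -> CC R), (forall n, A (u n)) /\
       (u n x @[n --> \oo] --> f x) /\ (u n y @[n --> \oo] --> f y)) ->
  (forall x y, ~ K0 x -> ~ K0 y -> x <> y -> exists2 g, A g & g x <> g y) ->
  (forall x y, K0 x -> x <> y -> exists2 g, A g & g x <> g y) ->
  ((forall x, ~ K0 x -> exists2 g, A g & g x <> 0) \/
   (forall c : CC R, A (fun _ => c))) ->
  (forall g, A g -> A (fun x => (g x)^*)) ->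
  uniformly_dense A.
Proof.
move=> _ Kc [x0 _] [Acont Aadd Amul Ascale] [g0 Ag0] Aapprox sep_out sep_K0 nz Aconj.
have A0 : A (fun=> 0).
  by have := Ascale 0 g0 Ag0; under eq_fun do rewrite mul0r.
have Asep x y : x <> y -> exists2 g, A g & g x <> g y.
  move=> xy; have [x_K0|x_K0] := pselect (K0 x); first exact: sep_K0.
  have [y_K0|y_K0] := pselect (K0 y); last exact: sep_out.
  by have [g Ag gyx] := sep_K0 y x y_K0 (nesym xy); exists g => // /esym.
have Anz x : exists2 g, A g & g x <> 0.
  case: nz => [nz|Aconst]; last by exists (fun=> 1) => //; exact/eqP/oner_neq0.
  have [x_K0|] := pselect (K0 x); last exact: nz.
  have [u [Au [ux _]]] := Aapprox (fun=> 1) (fun _ => cvg_cst _) x x x_K0 x_K0.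
  by have [n /eqP] := filter_ex (cvgr_neq0 _ ux (oner_neq0 _)); exists (u n).
exact: stone_weierstrass_complex Acont Aadd Amul Ascale A0 Aconj Asep Anz x0 Kc.
Qed.
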